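(* Let $\mathbf{M}=(M_1,\dots,M_n)$ be a POVM on $\mathbb{C}^d$ with all nonzero effects of rank one, which is an extreme point of the convex set of $n$-outcome POVMs on $\mathbb{C}^d$. Then there exist a POVM $\mathbf{M}'=(M'_1,\dots,M'_{n'})$ on $\mathbb{C}^d$ and a classical post-processing $\mathcal{Q}$ with $\mathbf{M}=\mathcal{Q}(\mathbf{M}')$ such that (i) $n'\le2d^2$, and (ii) for every $j\in[n']$, $M'_j=\alpha'_j\ket{\psi_j}\bra{\psi_j}$ with a unit vector $\ket{\psi_j}$ and $0\le\alpha'_j\le\frac1d$.
   Context: A POVM on $\mathbb{C}^d$ is a tuple of positive semidefinite operators summing to $\mathbb{I}_d$; convex combinations are taken effect-wise. A classical post-processing $\mathcal{Q}$ is given by numbers $q_{i|j}\ge0$ with $\sum_iq_{i|j}=1$, and $\mathcal{Q}(\mathbf{M}')$ has effects $\sum_jq_{i|j}M'_j$. *)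

From HB Require Import structures.
From mathcomp Require Import all_boot all_order all_algebra.
From mathcomp Require Import complex reals.
Set Implicit Arguments.
Unset Strict Implicit.
Unset Printing Implicit Defensive.
Import Order.TTheory GRing.Theory Num.Theory.
Local Open Scope ring_scope.

Definition adjmx (C : numClosedFieldType) (m n : nat) (A : 'M[C]_(m, n)) : 'M[C]_(n, m) :=
  (map_mx Num.conj A)^T.

Definition psd (C : numClosedFieldType) (d : nat) (A : 'M[C]_d) : Prop :=
  adjmx A = A /\ forall v : 'cV[C]_d, 0 <= (adjmx v *m A *m v) 0 0.

Definition is_povm (C : numClosedFieldType) (d n : nat) (M : 'I_n -> 'M[C]_d) : Prop :=
  (forall i, psd (M i)) /\ \sum_(i < n) M i = 1%:M.

Definition povm_comb (C : numClosedFieldType) (d n : nat) (t : C)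
  (M1 M2 : 'I_n -> 'M[C]_d) : 'I_n -> 'M[C]_d :=
  fun i => t *: M1 i + (1 - t) *: M2 i.

Definition extreme_povm (C : numClosedFieldType) (d n : nat) (M : 'I_n -> 'M[C]_d) : Prop :=
  is_povm M /\
  forall (M1 M2 : 'I_n -> 'M[C]_d) (t : C),
    is_povm M1 -> is_povm M2 -> 0 < t -> t < 1 ->
    (forall i, M i = povm_comb t M1 M2 i) -> (forall i, M1 i = M i) /\ (forall i, M2 i = M i).

Definition is_postproc (C : numClosedFieldType) (n n' : nat) (q : 'I_n -> 'I_n' -> C) : Prop :=
  (forall i j, 0 <= q i j) /\ (forall j, \sum_(i < n) q i j = 1).

Definition postproc (C : numClosedFieldType) (d n n' : nat) (q : 'I_n -> 'I_n' -> C)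
  (M' : 'I_n' -> 'M[C]_d) : 'I_n -> 'M[C]_d :=
  fun i => \sum_(j < n') q i j *: M' j.

From HB Require Import structures.
From mathcomp Require Import all_boot all_order all_algebra.
From mathcomp Require Import complex reals ring.
Set Implicit Arguments.
Unset Strict Implicit.
Unset Printing Implicit Defensive.
Import Order.TTheory GRing.Theory Num.Theory.
Local Open Scope ring_scope.

(* If sum_k c_k M_k = 0 with real |c_k| <= 1, then M is the average of the
   POVMs ((1 + c_k) M_k)_k and ((1 - c_k) M_k)_k, so extremality forces
   c_k M_k = 0; splitting complex coefficients into real and imaginary parts,
   the nonzero effects are linearly independent, hence at most d^2 of them.
   A nonzero rank-one effect is M_k = tr(M_k) |phi_k><phi_k| with phi_k a unit
   vector; cut it into m_k = floor(d tr M_k) + 1 equal pieces of weight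
   tr M_k / m_k <= 1/d.  Since sum_k tr M_k = d, there are at most
   d^2 + d^2 pieces, and merging the pieces of each M_k back together is a
   deterministic post-processing. *)

Section Adjoint.
Variable C : numClosedFieldType.

Lemma adjmxE m n (A : 'M[C]_(m, n)) i j : adjmx A i j = (A j i)^*.
Proof. by rewrite /adjmx !mxE. Qed.

Lemma adjmxK m n (A : 'M[C]_(m, n)) : adjmx (adjmx A) = A.
Proof. by apply/matrixP=> i j; rewrite !adjmxE conjCK. Qed.

Lemma adjmxM m n p (A : 'M[C]_(m, n)) (B : 'M[C]_(n, p)) :
  adjmx (A *m B) = adjmx B *m adjmx A.
Proof.
apply/matrixP=> i j; rewrite adjmxE !mxE rmorph_sum; apply: eq_bigr => k _.
by rewrite rmorphM !adjmxE mulrC.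
Qed.

Lemma adjmxZ m n a (A : 'M[C]_(m, n)) : adjmx (a *: A) = a^* *: adjmx A.
Proof. by apply/matrixP=> i j; rewrite /adjmx !mxE rmorphM. Qed.

Lemma adjmxD m n (A B : 'M[C]_(m, n)) : adjmx (A + B) = adjmx A + adjmx B.
Proof. by apply/matrixP=> i j; rewrite /adjmx !mxE rmorphD. Qed.

Lemma adjmx0 m n : adjmx (0 : 'M[C]_(m, n)) = 0.
Proof. by apply/matrixP=> i j; rewrite /adjmx !mxE rmorph0. Qed.

Lemma adjmx_sum (I : finType) m n (F : I -> 'M[C]_(m, n)) :
  adjmx (\sum_i F i) = \sum_i adjmx (F i).
Proof. exact: (big_morph (@adjmx C m n) (@adjmxD m n) (@adjmx0 m n)). Qed.

Lemma adjmx_delta n (i : 'I_n) : adjmx (delta_mx i 0 : 'cV[C]_n) = delta_mx 0 i.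
Proof.
apply/matrixP=> j k; rewrite adjmxE !mxE andbC.
by case: (_ && _); rewrite ?conjC1 ?conjC0.
Qed.

Lemma cnorm2E n (v : 'cV[C]_n) : (adjmx v *m v) 0 0 = \sum_i `|v i 0| ^+ 2.
Proof. by rewrite mxE; apply: eq_bigr => i _; rewrite adjmxE normCK mulrC. Qed.

Lemma cnorm2_gt0 n (v : 'cV[C]_n) : v != 0 -> 0 < (adjmx v *m v) 0 0.
Proof.
move=> nz_v; have sq_ge0 i : 0 <= `|v i 0| ^+ 2 by rewrite exprn_ge0.
rewrite cnorm2E lt_def sumr_ge0 // andbT psumr_eq0 //.
apply: contra nz_v => /allP v0; apply/eqP/matrixP => i j.
by rewrite ord1 mxE; apply/eqP; rewrite -normr_eq0 -sqrf_eq0 (implyP (v0 i _)).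
Qed.

Lemma mxtrace_outer n (phi : 'cV[C]_n) :
  \tr (phi *m adjmx phi) = (adjmx phi *m phi) 0 0.
Proof. by rewrite mxtrace_mulC trace_mx11. Qed.

End Adjoint.

Section PositiveSemidefinite.
Variables (C : numClosedFieldType) (d : nat).
Implicit Types (A : 'M[C]_d) (phi u : 'cV[C]_d).

Lemma psdZ a A : 0 <= a -> psd A -> psd (a *: A).
Proof.
move=> a_ge0 [hermA qA]; split; first by rewrite adjmxZ hermA conj_Creal ?ger0_real.
by move=> v; rewrite -scalemxAr -scalemxAl mxE mulr_ge0.
Qed.

Lemma psd_outer phi : psd (phi *m adjmx phi).
Proof.
split=> [|v]; first by rewrite adjmxM adjmxK.
rewrite mulmxA -mulmxA -[adjmx v *m phi]adjmxK adjmxM adjmxK.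
rewrite !mxE big_ord1 adjmxE mulrC; exact: mul_conjC_ge0.
Qed.

Lemma psd_mxtrace_ge0 A : psd A -> 0 <= \tr A.
Proof.
case=> _ qA; apply: sumr_ge0 => i _.
by have := qA (delta_mx i 0); rewrite adjmx_delta -rowE -colE !mxE.
Qed.

Lemma outer_normalize u : u != 0 ->
  exists2 phi : 'cV[C]_d, (adjmx phi *m phi) 0 0 = 1 &
    u *m adjmx u = (adjmx u *m u) 0 0 *: (phi *m adjmx phi).
Proof.
move=> nz_u; set n2 := (adjmx u *m u) 0 0.
have n2_gt0 : 0 < n2 := cnorm2_gt0 nz_u.
set r := sqrtC n2.
have r_gt0 : 0 < r by rewrite sqrtC_gt0.
have rr : r * r = n2 by rewrite -expr2 sqrtCK.
have r_conj : (r^-1)^* = r^-1 by rewrite conj_Creal // realV gtr0_real.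
exists (r^-1 *: u).
  rewrite adjmxZ r_conj -scalemxAl -scalemxAr scalerA mxE -/n2 -invfM rr.
  by rewrite mulVf ?gt_eqF.
rewrite adjmxZ r_conj -scalemxAl -scalemxAr !scalerA -mulrA -invfM rr.
by rewrite mulfV ?gt_eqF // scale1r.
Qed.

(* A = D w for the nonzero row w of A, and hermiticity makes D proportional
   to w^*. *)
Lemma herm_rank1_outer A : adjmx A = A -> \rank A = 1%N ->
  exists s (u : 'cV[C]_d), u != 0 /\ A = s *: (u *m adjmx u).
Proof.
move=> hermA rankA.
have nzA : A != 0 by rewrite -mxrank_eq0 rankA.
have [i0 nz_w] : exists i0, row i0 A != 0.
  apply/existsP; apply: contraNT nzA => /existsPn rows0.
  by apply/eqP/row_matrixP => i; rewrite row0; apply/eqP/negbNE/rows0.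
set w := row i0 A; set u := adjmx w.
have rank_w : \rank w = 1%N.
  by apply/eqP; rewrite eqn_leq rank_leq_row lt0n mxrank_eq0.
have /andP[_ /submxP[D defA]] : (w == A)%MS.
  by rewrite -(mxrank_leqif_eq (row_sub i0 A)).2 rank_w rankA.
have nz_u : u != 0.
  by apply: contraNneq nz_w => u0; rewrite -(adjmxK (row i0 A)) -/w -/u u0 adjmx0.
set n2 := (adjmx u *m u) 0 0; set s := (adjmx D *m u) 0 0.
have n2_neq0 : n2 != 0 by rewrite gt_eqF ?cnorm2_gt0.
have Au_D : A *m u = n2 *: D.
  by rewrite defA -mulmxA [w *m u]mx11_scalar /n2 /u adjmxK mul_mx_scalar.
have Au_u : A *m u = s *: u.
  by rewrite -hermA defA adjmxM -mulmxA [adjmx D *m u]mx11_scalar mul_mx_scalar.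
exists (s / n2), u; split=> //.
have D_u : D = (s / n2) *: u.
  by apply: (scalerI n2_neq0); rewrite -Au_D Au_u scalerA mulrCA mulfV ?mulr1.
by rewrite defA D_u /u adjmxK -scalemxAl.
Qed.

Lemma psd_rank1_outer A : psd A -> \rank A = 1%N ->
  exists2 phi : 'cV[C]_d, (adjmx phi *m phi) 0 0 = 1 & A = \tr A *: (phi *m adjmx phi).
Proof.
case=> hermA _ rankA; have [s [u [nz_u ->]]] := herm_rank1_outer hermA rankA.
have [phi unit_phi ->] := outer_normalize nz_u.
exists phi => //.
by rewrite scalerA mxtraceZ mxtrace_outer unit_phi mulr1.
Qed.

End PositiveSemidefinite.

Lemma real_scale_bound (F : numFieldType) (I : finType) (c : I -> F) :
  (forall i, c i \is Num.real) -> exists2 e : F, 0 < e & forall i, -1 <= e * c i <= 1.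
Proof.
move=> c_real; pose s := 1 + \sum_i `|c i|.
have s_gt0 : 0 < s by rewrite ltr_wpDr // sumr_ge0.
exists s^-1 => [|i]; first by rewrite invr_gt0.
rewrite -real_ler_norml ?realM ?realV ?c_real ?gtr0_real // normrM gtr0_norm ?invr_gt0 //.
rewrite mulrC ler_pdivrMr // mul1r /s (bigD1 i) //= addrCA lerDl addr_ge0 //.
exact: sumr_ge0.
Qed.

Section Extreme.
Variables (C : numClosedFieldType) (d n : nat) (M : 'I_n -> 'M[C]_d).

Lemma is_povm_perturb (c : 'I_n -> C) :
  is_povm M -> (forall k, -1 <= c k <= 1) -> \sum_k c k *: M k = 0 ->
  is_povm (fun k => (1 + c k) *: M k).
Proof.
move=> [psdM sumM] c_bound c_rel; split=> [k|].
  by apply: psdZ (psdM k); rewrite -lerBlDl sub0r; case/andP: (c_bound k).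
by rewrite (eq_bigr _ (fun k _ => scalerDl _ _ _)) big_split /= c_rel addr0 -sumM;
  apply: eq_bigr => k _; rewrite scale1r.
Qed.

Lemma extreme_povm_perturb (c : 'I_n -> C) :
  extreme_povm M -> (forall k, -1 <= c k <= 1) -> \sum_k c k *: M k = 0 ->
  forall k, c k *: M k = 0.
Proof.
move=> [povmM extM] c_bound c_rel k.
have povm_plus := is_povm_perturb povmM c_bound c_rel.
have povm_minus : is_povm (fun k => (1 + - c k) *: M k).
  apply: is_povm_perturb => // [j|]; first by rewrite lerNr opprK lerNl andbC.
  by rewrite (eq_bigr _ (fun j _ => scaleNr _ _)) sumrN c_rel oppr0.
have [||j|/(_ k) plus_k _] := extM _ _ 2^-1 povm_plus povm_minus.
- by rewrite invr_gt0 ltr0n.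
- by rewrite invf_lt1 ?ltr0n // ltr1n.
- rewrite /povm_comb !scalerA -scalerDl.
  suff -> : 2^-1 * (1 + c j) + (1 - 2^-1) * (1 + - c j) = 1 :> C by rewrite scale1r.
  by field.
by apply: (addrI (M k)); rewrite addr0 -[in RHS]plus_k scalerDl scale1r.
Qed.

Lemma extreme_povm_real_indep (c : 'I_n -> C) :
  extreme_povm M -> (forall k, c k \is Num.real) -> \sum_k c k *: M k = 0 ->
  forall k, c k *: M k = 0.
Proof.
move=> extM c_real c_rel k.
have [e e_gt0 e_bound] := real_scale_bound c_real.
have ec_rel : \sum_k (e * c k) *: M k = 0.
  by under eq_bigr do rewrite -scalerA; rewrite -scaler_sumr c_rel scaler0.
have := extreme_povm_perturb extM e_bound ec_rel k.
by rewrite -scalerA => /eqP; rewrite scaler_eq0 gt_eqF //= => /eqP.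
Qed.

Lemma extreme_povm_indep (c : 'I_n -> C) :
  extreme_povm M -> \sum_k c k *: M k = 0 -> forall k, c k *: M k = 0.
Proof.
move=> extM c_rel k; have [[psdM _] _] := extM.
have conj_rel : \sum_k (c k)^* *: M k = 0.
  rewrite -[RHS](adjmx0 C d d) -[X in adjmx X]c_rel adjmx_sum; apply: eq_bigr => j _.
  by rewrite adjmxZ (proj1 (psdM j)).
have comb_rel x y : \sum_k (x * c k + y * (c k)^*) *: M k = 0.
  under eq_bigr do rewrite scalerDl -!scalerA.
  by rewrite big_split /= -!scaler_sumr c_rel conj_rel !scaler0 addr0.
have re_rel : \sum_k 'Re (c k) *: M k = 0.
  rewrite -[RHS](comb_rel 2^-1 2^-1); apply: eq_bigr => j _.
  by rewrite ReE; congr (_ *: _); field.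
have im_rel : \sum_k 'Im (c k) *: M k = 0.
  rewrite -[RHS](comb_rel (- 'i / 2) ('i / 2)); apply: eq_bigr => j _.
  by rewrite ImE; congr (_ *: _); field.
rewrite [c k]Crect scalerDl -scalerA.
rewrite (extreme_povm_real_indep extM (fun j => Creal_Re (c j)) re_rel k).
rewrite (extreme_povm_real_indep extM (fun j => Creal_Im (c j)) im_rel k).
by rewrite scaler0 addr0.
Qed.

Lemma extreme_povm_card : extreme_povm M -> (#|[set k | M k != 0%R]| <= d ^ 2)%N.
Proof.
move=> extM; set S := [set k | M k != 0].
pose X := [tuple M (enum_val (A := S) i) | i < #|S|].
have free_X : free X.
  apply/freeP => a a_rel i.
  pose c k := \sum_(j < #|S| | enum_val (A := S) j == k) a j.
  have c_rel : \sum_k c k *: M k = 0.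
    rewrite -[RHS]a_rel (partition_big (fun j => enum_val (A := S) j) predT) //=.
    apply: eq_bigr => k _; rewrite scaler_suml; apply: eq_bigr => j /eqP <-.
    by rewrite nth_mktuple.
  have c_val : c (enum_val i) = a i.
    rewrite /c (eq_bigl (pred1 i)) ?big_pred1_eq // => j.
    by rewrite /= (inj_eq enum_val_inj).
  have /eqP := extreme_povm_indep extM c_rel (enum_val i).
  have := enum_valP i; rewrite inE c_val scaler_eq0 => /negbTE ->.
  by rewrite orbF => /eqP.
rewrite -(size_tuple X) -(eqP free_X) -mulnn.
by rewrite -[(d * d)%N](dim_matrix C) -dimvf dimvS ?subvf.
Qed.

End Extreme.

Section Repetition.
Variables (C : numClosedFieldType) (d n : nat) (m : 'I_n -> nat).

Definition rep_index := {k : 'I_n & 'I_(m k)}.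

Local Notation n' := #|{: rep_index}|.

Definition repeat_effects (N : 'I_n -> 'M[C]_d) (j : 'I_n') : 'M[C]_d :=
  N (tag (enum_val j)).

Definition merge_postproc (k : 'I_n) (j : 'I_n') : C := (tag (enum_val j) == k)%:R.

Lemma card_rep_index : n' = (\sum_k m k)%N.
Proof.
rewrite card_tagged sumnE big_map big_enum.
by apply: eq_bigr => k _; rewrite card_ord.
Qed.

Lemma sum_rep_index (V : nmodType) (G : 'I_n -> V) :
  \sum_(j < n') G (tag (enum_val j)) = \sum_k G k *+ m k.
Proof.
rewrite -(big_enum_val (fun x : rep_index => G (tag x))) (eq_bigl xpredT) //.
rewrite -(@sig_big_dep _ _ _ _ (fun k => 'I_(m k)) xpredT (fun _ => xpredT)
  (fun k _ => G k)) /=.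
by apply: eq_bigr => k _; rewrite sumr_const card_ord.
Qed.

Lemma is_postproc_merge : is_postproc merge_postproc.
Proof.
split=> [k j|j]; first exact: ler0n.
rewrite /merge_postproc (bigD1 (tag (enum_val j))) //= eqxx big1 ?addr0 // => k.
by rewrite eq_sym => /negbTE ->.
Qed.

Lemma postproc_merge_repeat N k :
  postproc merge_postproc (repeat_effects N) k = N k *+ m k.
Proof.
rewrite /postproc (sum_rep_index (fun k' => (k' == k)%:R *: N k')) (bigD1 k) //=.
by rewrite eqxx scale1r big1 ?addr0 // => k' /negbTE ->; rewrite scale0r mul0rn.
Qed.

Lemma is_povm_repeat N :
  (forall k, psd (N k)) -> \sum_k N k *+ m k = 1%:M -> is_povm (repeat_effects N).
Proof. by move=> psdN sumN; split=> [j|]; [exact: psdN | rewrite sum_rep_index]. Qed.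

End Repetition.

Arguments repeat_effects {C d n} m N j.
Arguments merge_postproc {C n} m k j.

Lemma refinement_size (C : numClosedFieldType) d n (M : 'I_n -> 'M[C]_d)
    (m : 'I_n -> nat) :
  is_povm M -> (#|[set k | M k != 0%R]| <= d ^ 2)%N ->
  (forall k, (m k)%:R <= d%:R * \tr (M k) + (M k != 0)%:R) ->
  (\sum_k m k <= 2 * d ^ 2)%N.
Proof.
move=> [_ sumM] card_nz m_bound; rewrite -(ler_nat C) natr_sum.
apply: le_trans (ler_sum _ (fun k _ => m_bound k)) _; rewrite big_split /=.
have -> : \sum_k (M k != 0)%:R = #|[set k | M k != 0]|%:R :> C.
  rewrite -sum1_card natr_sum [RHS]big_mkcond.
  by apply: eq_bigr => k _; rewrite inE; case: (M k != 0).
have tr_sum : \sum_k \tr (M k) = d%:R by rewrite -(mxtrace1 _ d) -sumM raddf_sum.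
by rewrite -mulr_sumr tr_sum mul2n -addnn natrD -natrM mulnn lerD2l ler_nat.
Qed.

Lemma complex_floor (R : realType) (x : R[i]) :
  0 <= x -> exists t : nat, t%:R <= x < t.+1%:R.
Proof.
move=> x_ge0; have x_Re : real_complex R (complex.Re x) = x by apply/RRe_real/ger0_real.
exists (Num.trunc (complex.Re x)).
rewrite -x_Re -!(rmorph_nat (real_complex R)) !lecR !ltcR.
by apply: truncn_itv; rewrite -lecR x_Re.
Qed.

(* For A = 0 there are no pieces (m = 0), and the weight is then 0 / 0 = 0. *)
Lemma effect_split (R : realType) d (A : 'M[R[i]]_d) :
  psd A -> (A != 0 -> \rank A = 1%N) ->
  exists (m : nat) (phi : 'cV[R[i]]_d),
    [/\ A = ((\tr A / m%:R) *: (phi *m adjmx phi)) *+ m,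
        m%:R <= d%:R * \tr A + (A != 0)%:R,
        (0 < m)%N -> (adjmx phi *m phi) 0 0 = 1,
        0 <= \tr A / m%:R & \tr A / m%:R <= d%:R^-1].
Proof.
move=> psdA rankA; have tr_ge0 := psd_mxtrace_ge0 psdA.
have [-> | nzA] := eqVneq A 0.
  by exists 0%N, 0; rewrite mxtrace0 mul0r invr_ge0 !ler0n mulr0 addr0.
have d_gt0 : (0 < d)%N.
  by case: d A nzA {psdA rankA tr_ge0} => // A; rewrite thinmx0 eqxx.
have [phi unit_phi defA] := psd_rank1_outer psdA (rankA nzA).
have [t /andP[t_le t_gt]] := complex_floor (mulr_ge0 (ler0n _ d) tr_ge0).
exists t.+1, phi; split=> //.
- by rewrite -scaler_nat scalerA mulrCA mulfV ?pnatr_eq0 // mulr1 -defA.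
- by rewrite -natr1 lerD2r.
- by rewrite divr_ge0.
by rewrite ler_pdivrMr ?ltr0n // ler_pdivlMl ?ltr0n // ltW.
Qed.

Theorem lemma8 (R : realType) (d n : nat) (M : 'I_n -> 'M[R[i]]_d) :
  is_povm M ->
  (forall k, M k != 0 -> \rank (M k) = 1%N) ->
  extreme_povm M ->
  exists (n' : nat) (M' : 'I_n' -> 'M[R[i]]_d) (q : 'I_n -> 'I_n' -> R[i]),
    [/\ is_povm M', is_postproc q, (forall k, M k = postproc q M' k),
        (n' <= 2 * d ^ 2)%N &
        forall j : 'I_n', exists (alpha : R[i]) (psi : 'cV[R[i]]_d),
          [/\ (adjmx psi *m psi) 0 0 = 1, M' j = alpha *: (psi *m adjmx psi),
              0 <= alpha & alpha <= d%:R^-1]].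
Proof.
move=> povmM rankM extM; have [psdM sumM] := povmM.
have /fin_all_exists[m /fin_all_exists[phi splitM]] :=
  fun k => effect_split (psdM k) (rankM k).
pose alpha k := \tr (M k) / (m k)%:R.
pose N k := alpha k *: (phi k *m adjmx (phi k)).
have defM k : M k = N k *+ m k by case: (splitM k).
exists _, (repeat_effects m N), (merge_postproc m); split.
- apply: is_povm_repeat => [k|]; first by apply/psdZ/psd_outer; case: (splitM k).
  by rewrite -sumM; apply: eq_bigr => k _; rewrite defM.
- exact: is_postproc_merge.
- by move=> k; rewrite postproc_merge_repeat.
- rewrite card_rep_index; apply: refinement_size povmM (extreme_povm_card extM) _.
  by move=> k; case: (splitM k).
move=> j; set k := tag (enum_val j).
have m_gt0 : (0 < m k)%N := leq_ltn_trans (leq0n _) (ltn_ord (tagged (enum_val j))).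
by exists (alpha k), (phi k); case: (splitM k) => _ _ /(_ m_gt0).
Qed.
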